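(* Let $p$ be a prime number and let $q_1<q_2<q_3$ be primes such that $q_1q_2q_3$ is coprime to $p(p-1)$. (a) Let $f(x)=x^{q_1q_2}\prod_{i=1}^{q_1}(x+p^i)^{q_1q_3}(x+p^{q_1+1})^{q_2q_3}\in\mathbb{Z}[x]$. Then $R(f)$ is dense in $\mathbb{Q}_p$; and for all but finitely many primes $q$, in particular for every prime $q>p^{q_1+1}$, $R(f)$ is not dense in $\mathbb{Q}_q$. (b) Let $$g_2(x_1,x_2)=x_1^{q_1q_2}\prod_{i=1}^{q_1}(x_1+p^ix_2)^{q_1q_3}(x_1+p^{q_1+1}x_2)^{q_2q_3}\prod_{i=1}^{q_3-1}(p^ix_1+x_2)^{q_1q_2}\prod_{i=q_3}^{q_3+q_2-q_1-1}(p^ix_1+x_2)^{q_1q_3}\prod_{i=q_3+q_2-q_1}^{q_3+q_2-2}(p^ix_1+x_2)^{q_2q_3}.$$ Then $R(g_2)$ is dense in $\mathbb{Q}_p$; and for all but finitely many primes $q$, in particular for every prime $q>p^{q_3+q_2+q_1-1}$, $R(g_2)$ is not dense in $\mathbb{Q}_q$. (c) Let $n>2$ be an integer and $g_n(x_1,\ldots,x_n)=g_2(x_1,x_2)(x_3\cdots x_n)^{q_1q_2q_3}$. Then $R(g_n)$ is dense in $\mathbb{Q}_p$; and for all but finitely many primes $q$, in particular for every prime $q>p^{q_3+q_2+q_1-1}$, $R(g_n)$ is not dense in $\mathbb{Q}_q$.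
   Context: For a polynomial $h\in\mathbb{Z}[x_1,\dots,x_r]$, $R(h)=\{h(\overline{x})/h(\overline{y}) : \overline{x},\overline{y}\in\mathbb{Z}^r,\ h(\overline{y})\neq 0\}$, and density is in the $p$-adic (resp. $q$-adic) topology. *)

From mathcomp Require Import all_boot all_order all_algebra.
Set Implicit Arguments. Unset Strict Implicit. Unset Printing Implicit Defensive.
Import Order.TTheory GRing.Theory Num.Theory.
Local Open Scope ring_scope.

Definition padic_val (p : nat) (r : rat) : int :=
  (logn p `|numq r|%N)%:Z - (logn p `|denq r|%N)%:Z.

(* A set S of rationals is dense in Q_p.  Since Q is dense in Q_p, this is
   equivalent to: every rational r can be approximated p-adically to any
   precision p^-k by elements of S. *)
Definition dense_Qp (p : nat) (S : rat -> Prop) : Prop :=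
  forall (r : rat) (k : nat), exists s : rat,
    S s /\ (s = r \/ k%:Z <= padic_val p (s - r)).

(* R(h) = { h(x)/h(y) : x, y integer points, h(y) <> 0 }, where the
   polynomial h is given through its evaluation map on integer points. *)
Definition Rset (X : Type) (h : X -> int) : rat -> Prop :=
  fun s => exists x y : X, h y != 0 /\ s = (h x)%:~R / (h y)%:~R.

Definition f_poly (p q1 q2 q3 : nat) (x : int) : int :=
  x ^+ (q1 * q2)%N
  * (\prod_(1 <= i < q1.+1) (x + (p%:Z) ^+ i) ^+ (q1 * q3)%N)
  * (x + (p%:Z) ^+ q1.+1) ^+ (q2 * q3)%N.

Definition g2_poly (p q1 q2 q3 : nat) (x1 x2 : int) : int :=
  x1 ^+ (q1 * q2)%N
  * (\prod_(1 <= i < q1.+1) (x1 + (p%:Z) ^+ i * x2) ^+ (q1 * q3)%N)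
  * (x1 + (p%:Z) ^+ q1.+1 * x2) ^+ (q2 * q3)%N
  * (\prod_(1 <= i < q3) ((p%:Z) ^+ i * x1 + x2) ^+ (q1 * q2)%N)
  * (\prod_(q3 <= i < q3 + q2 - q1) ((p%:Z) ^+ i * x1 + x2) ^+ (q1 * q3)%N)
  * (\prod_(q3 + q2 - q1 <= i < q3 + q2 - 1) ((p%:Z) ^+ i * x1 + x2) ^+ (q2 * q3)%N).

Definition g2_fun (p q1 q2 q3 : nat) (x : int * int) : int :=
  g2_poly p q1 q2 q3 x.1 x.2.

(* coordinate i (0-indexed) of a point of Z^n, 0 if out of range *)
Definition coord (n : nat) (x : 'I_n -> int) (i : nat) : int :=
  if insub i is Some j then x j else 0.

Definition gn_fun (p q1 q2 q3 n : nat) (x : 'I_n -> int) : int :=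
  g2_poly p q1 q2 q3 (coord x 0) (coord x 1)
  * (\prod_(2 <= i < n) coord x i) ^+ (q1 * q2 * q3)%N.
Arguments gn_fun : clear implicits.

From Pilot Require Import Defs.
From mathcomp Require Import all_boot all_order all_algebra.
From mathcomp Require Import zify ring cyclic.
Import Order.TTheory GRing.Theory Num.Theory.
Set Implicit Arguments. Unset Strict Implicit. Unset Printing Implicit Defensive.
Local Open Scope ring_scope.

(* Non-density in Q_q.  For a prime q > p^E the pairwise determinants of the linear
   forms x1, x1 + p^i x2, p^j x1 + x2 whose powers make up g_2 (f(x) is the product of
   the first q1 + 2 of them at x2 = 1) are nonzero integers of absolute value < q.  So
   at a point with coprime coordinates q divides at most one factor, and, g_2 being
   homogeneous of degree 3 q1 q2 q3, the q-adic valuation of every nonzero value of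
   f, g_2, g_n is a multiple of q1 q2, q1 q3 or q2 q3.  No two such numbers are
   consecutive, hence no ratio of values has valuation 1 and q is not a q-adic limit
   of R(h).

   Density in Q_p.  It suffices to realise every valuation v and every unit class
   modulo p^K by a ratio h(x)/h(y).  At y = p^m the value f(y) is p^(C_0 + m q1 q2)
   times a unit ≡ 1 mod p^K, and at x = p^i (p^n w - 1), 1 <= i <= q1, it is
   p^(C_i + n q1 q3) times a unit ≡ w^(q1 q3) V_i mod p^K, where C_i ≡ i q2 q3 mod q1.
   Choosing i from v mod q1 and then n, m by Bezout fixes the valuation; as q1 q3 is
   prime to phi(p^K), w^(q1 q3) runs through all units.  The cofactor g_2(x, 1) / f(x)
   is a polynomial in x that is ≡ 1 near 0, so it does not disturb this. *)

Definition logz (p : nat) (z : int) : nat := logn p `|z|.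

Section IntLogarithm.
Variable p : nat.
Hypothesis p_pr : prime p.
Local Notation P := p%:Z.

Lemma logzM a b : a != 0 -> b != 0 -> logz p (a * b) = (logz p a + logz p b)%N.
Proof. by move=> a0 b0; rewrite /logz abszM lognM // absz_gt0. Qed.

Lemma logzX a e : logz p (a ^+ e) = (e * logz p a)%N.
Proof. by rewrite /logz abszX lognX. Qed.

Lemma logz_pexp c : logz p (P ^+ c) = c.
Proof. by rewrite /logz abszX absz_nat pfactorK. Qed.

Lemma prime_coprimez z : coprimez P z = ~~ (P %| z)%Z.
Proof. by rewrite coprimezE absz_nat prime_coprime. Qed.

Lemma logz_coprime z : coprimez P z -> logz p z = 0%N.
Proof. by rewrite coprimezE absz_nat => /logn_coprime. Qed.

Lemma logz_ndvdz z : ~~ (P %| z)%Z -> logz p z = 0%N.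
Proof. by rewrite -prime_coprimez; apply: logz_coprime. Qed.

Lemma coprimez_neq0 z : coprimez P z -> z != 0.
Proof.
by apply: contraTneq => ->; rewrite /coprimez gcdz0 eqz_nat absz_nat gtn_eqF ?prime_gt1.
Qed.

Lemma logz_pexpM_coprime c z : coprimez P z -> logz p (P ^+ c * z) = c.
Proof.
move=> cz; have PX0 : P ^+ c != 0 by rewrite expf_neq0 // eqz_nat -lt0n prime_gt0.
have z0 := coprimez_neq0 cz.
by rewrite logzM // logz_pexp logz_coprime ?addn0.
Qed.

Lemma pexp_dvdzE K z : z != 0 -> (P ^+ K %| z)%Z = (K <= logz p z)%N.
Proof. by move=> z0; rewrite dvdzE abszX absz_nat pfactor_dvdn // absz_gt0. Qed.

Lemma logz_prod (I : Type) (r : seq I) (F : I -> int) :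
  \prod_(i <- r) F i != 0 ->
  logz p (\prod_(i <- r) F i) = (\sum_(i <- r) logz p (F i))%N.
Proof.
elim: r => [|i r IH]; first by rewrite !big_nil /logz logn1.
by rewrite !big_cons mulf_eq0 negb_or => /andP[Fi0 F0]; rewrite logzM // IH.
Qed.

Lemma padic_val_frac a b : a != 0 -> b != 0 ->
  padic_val p (a%:~R / b%:~R) = (logz p a)%:Z - (logz p b)%:Z.
Proof.
move=> a0 b0; set r := _ / _.
have r0 : r != 0 by rewrite mulf_neq0 ?invr_eq0 ?intr_eq0.
have e : numq r * b = a * denq r.
  apply: (@intr_inj rat); rewrite !rmorphM /= numqE /r.
  by rewrite mulrAC divfK ?intr_eq0.
have := congr1 (logz p) e; rewrite !logzM ?numq_eq0 ?denq_neq0 // => e2.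
rewrite /padic_val -/(logz p (numq r)) -/(logz p (denq r)); lia.
Qed.

Lemma logz_dvdz_sub u z : z != 0 -> (P ^+ (logz p z).+1 %| u - z)%Z ->
  u != 0 /\ logz p u = logz p z.
Proof.
set v := logz p z => z0 uz.
have z_v : (P ^+ v %| z)%Z by rewrite pexp_dvdzE.
have z_nv : ~~ (P ^+ v.+1 %| z)%Z by rewrite pexp_dvdzE // ltnn.
have u_nv : ~~ (P ^+ v.+1 %| u)%Z.
  by apply: contra z_nv => u_v; rewrite -[z](subKr u) rpredB.
have u0 : u != 0 by apply: contraNneq u_nv => ->; apply: dvdz0.
have u_v : (P ^+ v %| u)%Z.
  by rewrite -(subrK z u) rpredD //; apply: dvdz_trans uz; apply: dvdz_exp2l.
by split=> //; move: u_v u_nv; rewrite !pexp_dvdzE //; lia.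
Qed.

End IntLogarithm.

Definition pair_multiple (q1 q2 q3 n : nat) : bool :=
  [|| (q1 * q2 %| n)%N, (q1 * q3 %| n)%N | (q2 * q3 %| n)%N].

Section PairMultiples.
Variables q1 q2 q3 : nat.
Hypotheses (q1_pr : prime q1) (q2_pr : prime q2) (q3_pr : prime q3).
Local Notation M := (pair_multiple q1 q2 q3).

Lemma pair_multiple0 : M 0.
Proof. by rewrite /pair_multiple dvdn0. Qed.

(* Any two of the three pairs share a prime, and no prime divides both n and n + 1. *)
Lemma pair_multiple_succ n : M n -> ~~ M n.+1.
Proof.
have coprime_succ r : prime r -> (r %| n)%N -> (r %| n.+1)%N -> False.
  move=> r_pr rn; rewrite -addn1 dvdn_addr // dvdn1 => /eqP r1.
  by have := prime_gt1 r_pr; rewrite r1.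
have dvdn_pair x y m : (x * y %| m)%N -> (x %| m)%N /\ (y %| m)%N.
  by move=> xy; split; apply: dvdn_trans xy; [apply: dvdn_mulr | apply: dvdn_mull].
move=> Mn; apply/negP => Mn1.
case/or3P: Mn => /dvdn_pair[? ?]; case/or3P: Mn1 => /dvdn_pair[? ?];
  first [exact: (coprime_succ q1) | exact: (coprime_succ q2) | exact: (coprime_succ q3)].
Qed.

Lemma pair_multipleDl m n : (q1 * q2 * q3 %| m)%N -> M n -> M (m + n).
Proof.
move=> m123 /or3P[h|h|h]; apply/or3P; [apply: Or31 | apply: Or32 | apply: Or33];
  apply: dvdn_add => //; apply: dvdn_trans m123.
- exact: dvdn_mulr.
- by rewrite mulnAC dvdn_mulr.
- by rewrite -mulnA dvdn_mull.
Qed.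

Theorem not_dense_Qp_pair_multiple (X : Type) (h : X -> int) q : prime q ->
  (forall x, h x != 0 -> M (logz q (h x))) -> ~ dense_Qp q (Rset h).
Proof.
move=> q_pr hM dense; have q0 : q%:Z != 0 by rewrite eqz_nat -lt0n prime_gt0.
have [s [[x [y [hy0 ->]]] close]] := dense q%:Q 2%N.
set b := logz q (h y); set d := h x - q%:Z * h y.
have log_qy : logz q (q%:Z * h y) = b.+1.
  by rewrite logzM // -[q%:Z]expr1 logz_pexp.
suff d_div : (q%:Z ^+ b.+2 %| d)%Z.
  rewrite -log_qy in d_div.
  have [hx0 log_hx] := logz_dvdz_sub q_pr (mulf_neq0 q0 hy0) d_div.
  by move: (hM _ hx0); rewrite log_hx log_qy; apply/negP/pair_multiple_succ/hM.
have [->|d0] := eqVneq d 0; first exact: dvdz0.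
have ratio_sub : (h x)%:~R / (h y)%:~R - q%:Q = d%:~R / (h y)%:~R.
  by rewrite /d rmorphB rmorphM /=; field; rewrite intr_eq0.
case: close => [ratio_q | ].
  move: ratio_sub; rewrite ratio_q subrr => /esym/eqP.
  by rewrite mulf_eq0 invr_eq0 !intr_eq0 (negbTE d0) (negbTE hy0).
by rewrite ratio_sub padic_val_frac // pexp_dvdzE //; lia.
Qed.

End PairMultiples.

Lemma PoszX (m n : nat) : (m ^ n)%N%:Z = m%:Z ^+ n.
Proof. by rewrite -[LHS]natz natrX natz. Qed.

Lemma ndvdz_small q z : (0 < `|z| < q)%N -> ~~ (q%:Z %| z)%Z.
Proof. by case/andP=> z0 zq; rewrite dvdzE absz_nat; apply/negP => /(dvdn_leq z0); lia. Qed.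

Lemma ndvdz_pexpB p q a b : (1 < p)%N -> a != b -> (p ^ maxn a b < q)%N ->
  ~~ (q%:Z %| p%:Z ^+ a - p%:Z ^+ b)%Z.
Proof.
move=> p1; wlog ab : a b / (a < b)%N => [sym ab bq|_ bq].
  have [ab'|ba|eq_ab] := ltngtP a b; first exact: sym.
    by rewrite -rpredN opprB; apply: sym; rewrite 1?eq_sym 1?maxnC.
  by rewrite eq_ab eqxx in ab.
have pab : (p ^ a < p ^ b)%N by rewrite ltn_exp2l.
rewrite -rpredN opprB -!PoszX subzn; last exact: ltnW pab.
apply: ndvdz_small.
by rewrite absz_nat; move: bq; rewrite (maxn_idPr (ltnW ab)); lia.
Qed.

Lemma dvdz_lin_forms q (a b c d x1 x2 : int) : prime q ->
  ~~ (q%:Z %| a * d - b * c)%Z ->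
  (q%:Z %| a * x1 + b * x2)%Z -> (q%:Z %| c * x1 + d * x2)%Z ->
  (q%:Z %| x1)%Z && (q%:Z %| x2)%Z.
Proof.
move=> q_pr; rewrite -prime_coprimez // => cop L1 L2.
rewrite -(Gauss_dvdzr _ cop) -[X in _ && X](Gauss_dvdzr _ cop).
have -> : (a * d - b * c) * x1 = d * (a * x1 + b * x2) - b * (c * x1 + d * x2) by ring.
have -> : (a * d - b * c) * x2 = a * (c * x1 + d * x2) - c * (a * x1 + b * x2) by ring.
by rewrite !rpredB ?dvdz_mull.
Qed.

(* Factors of the form x1 + p^k x2 are indexed by 1 <= k <= q1 + 1, those of
   the form p^i x1 + x2 by k = q1 + 1 + i, and the factor x1 by k = 0. *)
Definition lform (p q1 k : nat) : int * int :=
  if k == 0%N then (1, 0)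
  else if (k <= q1.+1)%N then (1, p%:Z ^+ k) else (p%:Z ^+ (k - q1.+1), 1).

Definition lform_eval (p q1 k : nat) (x1 x2 : int) : int :=
  (lform p q1 k).1 * x1 + (lform p q1 k).2 * x2.

Section LinearFactors.
Variables p q q1 : nat.
Hypothesis p_gt1 : (1 < p)%N.
Local Notation L := (lform p q1).
Local Notation P := p%:Z.

Lemma lform_det_ndvdz k l : k != l -> (p ^ maxn k l < q)%N ->
  ~~ (q%:Z %| (L k).1 * (L l).2 - (L k).2 * (L l).1)%Z.
Proof.
have p0 : (0 < p)%N by lia.
have pX_small a : (p ^ a < q)%N -> ~~ (q%:Z %| P ^+ a)%Z.
  by move=> aq; rewrite -PoszX ndvdz_small // absz_nat expn_gt0 p0.
wlog kl : k l / (k < l)%N => [sym kl lq|_].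
  have [kl'|lk|eq_kl] := ltngtP k l; first exact: sym.
    rewrite -rpredN opprB [X in X - _]mulrC [X in _ - X]mulrC.
    by apply: sym; rewrite 1?eq_sym 1?maxnC.
  by rewrite eq_kl eqxx in kl.
rewrite /L /lform (maxn_idPr (ltnW kl)) => lq.
have {}pX_small a : (a <= l)%N -> ~~ (q%:Z %| P ^+ a)%Z.
  by move=> al; apply/pX_small/(leq_ltn_trans _ lq); rewrite leq_pexp2l.
have pXB_small a b : a != b -> (maxn a b <= l)%N -> ~~ (q%:Z %| P ^+ a - P ^+ b)%Z.
  by move=> ab abl; apply/ndvdz_pexpB/(leq_ltn_trans _ lq); rewrite ?leq_pexp2l.
have -> : (l == 0%N) = false by lia.
case: eqP => [_|/eqP k0] /=.
  by case: ifP => _; rewrite ?mul1r ?mul0r ?subr0 // -(expr0 P) pX_small.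
case: ifP => kq1; case: ifP => lq1 /=; try lia.
- by rewrite mul1r mulr1; apply: pXB_small; lia.
- by rewrite mul1r -exprD -(expr0 P); apply: pXB_small; lia.
- by rewrite mulr1 mul1r; apply: pXB_small; lia.
Qed.

Lemma lform_dvdz_uniq E x1 x2 k l : prime q -> (p ^ E < q)%N ->
  ~~ ((q%:Z %| x1)%Z && (q%:Z %| x2)%Z) -> (k <= E)%N -> (l <= E)%N ->
  (q%:Z %| lform_eval p q1 k x1 x2)%Z -> (q%:Z %| lform_eval p q1 l x1 x2)%Z -> k = l.
Proof.
move=> q_pr Eq x_prim kE lE Lk Ll; apply/eqP; apply: contraNT x_prim => kl.
apply: dvdz_lin_forms Lk Ll => //; apply: lform_det_ndvdz => //.
by apply: leq_ltn_trans Eq; rewrite leq_pexp2l ?geq_max ?kE //; lia.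
Qed.

End LinearFactors.

Lemma logz_prod_coprime_factors q N (L : nat -> int) (e : nat -> nat) : prime q ->
  (forall k l, (k < N)%N -> (l < N)%N ->
     (q%:Z %| L k)%Z -> (q%:Z %| L l)%Z -> k = l) ->
  \prod_(0 <= k < N) L k ^+ e k != 0 ->
  logz q (\prod_(0 <= k < N) L k ^+ e k) = 0%N \/
  exists2 k, (k < N)%N & logz q (\prod_(0 <= k < N) L k ^+ e k) = (e k * logz q (L k))%N.
Proof.
move=> q_pr div_uniq prod0; rewrite logz_prod //.
have [/hasP[k] | /hasPn none] := boolP (has (fun k => q%:Z %| L k)%Z (index_iota 0 N)).
  rewrite mem_index_iota => /andP[_ kN] Lk; right; exists k => //.
  rewrite (bigD1_seq k) ?mem_index_iota ?iota_uniq //= logzX big1_seq ?addn0 //.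
  move=> l /andP[lk]; rewrite mem_index_iota => /andP[_ lN].
  rewrite logzX logz_ndvdz ?muln0 //; apply: contra lk => Ll.
  by rewrite (div_uniq l k).
by left; apply: big1_seq => k /andP[_ kN]; rewrite logzX logz_ndvdz ?muln0 ?none.
Qed.

Definition lform_exp (q1 q2 q3 k : nat) : nat :=
  if k == 0%N then (q1 * q2)%N
  else if (k <= q1)%N then (q1 * q3)%N
  else if k == q1.+1 then (q2 * q3)%N
  else if (k - q1.+1 < q3)%N then (q1 * q2)%N
  else if (k - q1.+1 < q3 + q2 - q1)%N then (q1 * q3)%N
  else (q2 * q3)%N.

Lemma pair_multiple_lform_exp q1 q2 q3 k n :
  pair_multiple q1 q2 q3 (lform_exp q1 q2 q3 k * n).
Proof.
rewrite /lform_exp; do ![case: ifP => _]; apply/or3P;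
  by [apply: Or31; apply: dvdn_mulr | apply: Or32; apply: dvdn_mulr | apply: Or33; apply: dvdn_mulr].
Qed.

Section FactorIndexing.
Variables (p q1 q2 q3 : nat) (x1 x2 : int).
Local Notation P := p%:Z.
Local Notation F k := (lform_eval p q1 k x1 x2 ^+ lform_exp q1 q2 q3 k).

Lemma lform_prod_head :
  \prod_(0 <= k < q1.+2) F k =
  x1 ^+ (q1 * q2) * (\prod_(1 <= i < q1.+1) (x1 + P ^+ i * x2) ^+ (q1 * q3))
  * (x1 + P ^+ q1.+1 * x2) ^+ (q2 * q3).
Proof.
rewrite big_ltn // big_nat_recr //= mulrA; congr (_ * _ * _).
- by rewrite /lform_eval /lform_exp /= mul1r mul0r addr0.
- apply: eq_big_nat => i /andP[i1 iq1].
  by rewrite /lform_eval /lform /lform_exp /=; do ![case: ifP => ? /=; try lia]; rewrite mul1r.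
- by rewrite /lform_eval /lform /lform_exp /=; do ![case: ifP => ? /=; try lia]; rewrite mul1r.
Qed.

Lemma lform_prod_tail : (0 < q1)%N -> (q1 < q2)%N -> (q2 < q3)%N ->
  \prod_(q1.+2 <= k < q3 + q2 + q1) F k =
  (\prod_(1 <= i < q3) (P ^+ i * x1 + x2) ^+ (q1 * q2))
  * (\prod_(q3 <= i < q3 + q2 - q1) (P ^+ i * x1 + x2) ^+ (q1 * q3))
  * (\prod_(q3 + q2 - q1 <= i < q3 + q2 - 1) (P ^+ i * x1 + x2) ^+ (q2 * q3)).
Proof.
move=> q1_gt0 q12 q23; rewrite -[q1.+2]/(1 + q1.+1)%N big_addn.
have -> : (q3 + q2 + q1 - q1.+1 = q3 + q2 - 1)%N by lia.
rewrite (big_cat_nat _ (n := q3 + q2 - q1)) 1?(big_cat_nat _ (n := q3)); try lia.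
congr (_ * _ * _); apply: eq_big_nat => i /andP[lo hi];
  rewrite /lform_eval /lform /lform_exp /=; do ![case: ifP => ? /=; try lia];
  by rewrite addnK mul1r.
Qed.

End FactorIndexing.

Lemma f_poly_lforms p q1 q2 q3 x : f_poly p q1 q2 q3 x =
  \prod_(0 <= k < q1.+2) lform_eval p q1 k x 1 ^+ lform_exp q1 q2 q3 k.
Proof.
rewrite lform_prod_head /f_poly mulr1; congr (_ * _ * _).
by apply: eq_bigr => i _; rewrite mulr1.
Qed.

Lemma g2_poly_lforms p q1 q2 q3 x1 x2 : (0 < q1)%N -> (q1 < q2)%N -> (q2 < q3)%N ->
  g2_poly p q1 q2 q3 x1 x2 =
  \prod_(0 <= k < q3 + q2 + q1) lform_eval p q1 k x1 x2 ^+ lform_exp q1 q2 q3 k.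
Proof.
move=> q1_gt0 q12 q23; rewrite (big_cat_nat _ (n := q1.+2)) ?lform_prod_head ?lform_prod_tail //;
  try lia.
by rewrite /g2_poly /= !mulrA.
Qed.

Lemma g2_degree q1 q2 q3 : (0 < q1)%N -> (q1 < q2)%N -> (q2 < q3)%N ->
  (3 * (q1 * q2 * q3) = q1 * q2 + q1 * q3 * (q1.+1 - 1) + q2 * q3
   + q1 * q2 * (q3 - 1) + q1 * q3 * (q3 + q2 - q1 - q3)
   + q2 * q3 * (q3 + q2 - 1 - (q3 + q2 - q1)))%N.
Proof.
case: q1 => // r1 _; case: q3 => // r3 q12 q23.
have [r2 ->] : exists r2, q2 = (r1.+1 + r2)%N by exists (q2 - r1.+1)%N; lia.
rewrite (_ : r3.+1 + (r1.+1 + r2) - r1.+1 - r3.+1 = r2)%N; last by lia.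
rewrite (_ : r3.+1 + (r1.+1 + r2) - 1 - (r3.+1 + (r1.+1 + r2) - r1.+1) = r1)%N; last by lia.
by rewrite !subn1 /=; ring.
Qed.

Section NotDense.
Variables p q q1 q2 q3 : nat.
Hypotheses (p_gt1 : (1 < p)%N) (q_pr : prime q).
Hypotheses (q1_gt0 : (0 < q1)%N) (q12 : (q1 < q2)%N) (q23 : (q2 < q3)%N).
Local Notation M := (pair_multiple q1 q2 q3).
Local Notation g2 := (g2_poly p q1 q2 q3).

Lemma f_poly_pair_multiple x : (p ^ q1.+1 < q)%N ->
  f_poly p q1 q2 q3 x != 0 -> M (logz q (f_poly p q1 q2 q3 x)).
Proof.
rewrite f_poly_lforms => q_big fx0.
have x_prim : ~~ ((q%:Z %| x)%Z && (q%:Z %| 1)%Z).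
  by rewrite dvdz1 absz_nat gtn_eqF ?prime_gt1 ?andbF.
have [->|[k _ ->]] := logz_prod_coprime_factors q_pr
  (fun k l kN lN => lform_dvdz_uniq p_gt1 q_pr q_big x_prim (ltnSE kN) (ltnSE lN)) fx0.
  exact: pair_multiple0.
exact: pair_multiple_lform_exp.
Qed.

Lemma g2_poly_pair_multiple_coprime x1 x2 : (p ^ (q3 + q2 + q1 - 1) < q)%N ->
  ~~ ((q%:Z %| x1)%Z && (q%:Z %| x2)%Z) ->
  g2 x1 x2 != 0 -> M (logz q (g2 x1 x2)).
Proof.
rewrite g2_poly_lforms // => q_big x_prim gx0.
have below_E k : (k < q3 + q2 + q1)%N -> (k <= q3 + q2 + q1 - 1)%N by lia.
have [->|[k _ ->]] := logz_prod_coprime_factors q_pr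
  (fun k l kN lN => lform_dvdz_uniq p_gt1 q_pr q_big x_prim (below_E k kN) (below_E l lN)) gx0.
  exact: pair_multiple0.
exact: pair_multiple_lform_exp.
Qed.

Lemma g2_poly_homogeneous (t a b : int) :
  g2 (t * a) (t * b) = t ^+ (3 * (q1 * q2 * q3)) * g2 a b.
Proof.
have scale1 i : t * a + p%:Z ^+ i * (t * b) = t * (a + p%:Z ^+ i * b) by ring.
have scale2 i : p%:Z ^+ i * (t * a) + t * b = t * (p%:Z ^+ i * a + b) by ring.
rewrite /g2_poly; under eq_bigr do rewrite scale1 exprMn.
under [X in _ * X * _ * _]eq_bigr do rewrite scale2 exprMn.
under [X in _ * X * _]eq_bigr do rewrite scale2 exprMn.
under [X in _ * X]eq_bigr do rewrite scale2 exprMn.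
rewrite scale1 !big_split /= !prodr_const_nat -!exprM g2_degree // !exprD !exprMn; ring.
Qed.

Lemma g2_poly0l b : g2 0 b = 0.
Proof.
by rewrite /g2_poly expr0n muln_eq0 (gtn_eqF q1_gt0) (gtn_eqF (ltn_trans q1_gt0 q12)) /= !mul0r.
Qed.

Lemma g2_poly_pair_multiple x1 x2 : (p ^ (q3 + q2 + q1 - 1) < q)%N ->
  g2 x1 x2 != 0 -> M (logz q (g2 x1 x2)).
Proof.
move=> q_big; elim: {x1}`|x1|%N {-2}x1 (leqnn `|x1|%N) x2 => [|n IH] x1 x1n x2 gx0.
  by move: gx0; rewrite (_ : x1 = 0) ?g2_poly0l ?eqxx //; apply/eqP; rewrite -absz_eq0; lia.
have [/andP[/dvdzP[a ea] /dvdzP[b eb]] | x_prim] := boolP ((q%:Z %| x1)%Z && (q%:Z %| x2)%Z);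
  last exact: g2_poly_pair_multiple_coprime.
subst x1 x2.
rewrite ![_ * q%:Z]mulrC g2_poly_homogeneous in gx0 *.
have q0 : q%:Z != 0 by rewrite eqz_nat -lt0n prime_gt0.
have gab0 : g2 a b != 0 by move: gx0; rewrite mulf_eq0 negb_or => /andP[].
have a0 : a != 0 by apply/eqP => a0; move: gab0; rewrite a0 g2_poly0l eqxx.
rewrite logzM ?expf_neq0 // logzX -[q%:Z]expr1 logz_pexp // muln1.
apply: pair_multipleDl; first exact: dvdn_mull.
apply: IH gab0; move: x1n; rewrite abszM absz_nat.
have := prime_gt1 q_pr; have : (0 < `|a|)%N by rewrite absz_gt0.
nia.
Qed.

Lemma gn_fun_pair_multiple n x : (p ^ (q3 + q2 + q1 - 1) < q)%N ->
  gn_fun p q1 q2 q3 n x != 0 -> M (logz q (gn_fun p q1 q2 q3 n x)).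
Proof.
rewrite /gn_fun mulf_eq0 negb_or => q_big /andP[gx0 prod0].
rewrite logzM // logzX addnC; apply: pair_multipleDl; first exact: dvdn_mulr.
exact: g2_poly_pair_multiple.
Qed.

End NotDense.

Section Congruences.
Variable N : int.

Lemma dvdz_subM a a' b b' : (N %| a - a')%Z -> (N %| b - b')%Z -> (N %| a * b - a' * b')%Z.
Proof.
move=> aa bb; have -> : a * b - a' * b' = a * (b - b') + b' * (a - a') by ring.
by rewrite rpredD ?dvdz_mull.
Qed.

Lemma dvdz_subX a a' k : (N %| a - a')%Z -> (N %| a ^+ k - a' ^+ k)%Z.
Proof. by move=> aa; elim: k => [|k IH]; rewrite ?subrr ?dvdz0 // !exprS dvdz_subM. Qed.


End Congruences.

Lemma coprimez1 (m : int) : coprimez m 1.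
Proof. by rewrite /coprimez gcdz1. Qed.

Section PadicUnits.
Variable p : nat.
Hypothesis p_pr : prime p.
Local Notation P := p%:Z.

Lemma coprimez_congr K a b : (0 < K)%N -> (P ^+ K %| a - b)%Z ->
  coprimez P a = coprimez P b.
Proof.
move=> K0 /(dvdz_trans (dvdz_exp2l P K0)); rewrite expr1 => /dvdzP[c ab].
by rewrite /coprimez -(subrK b a) ab gcdzMDl.
Qed.

Lemma coprimez_1BpX d : (0 < d)%N -> coprimez P (1 - P ^+ d).
Proof.
move=> d0; rewrite (@coprimez_congr 1 _ 1) ?coprimez1 //.
by rewrite addrAC subrr add0r rpredN expr1 -(prednK d0) exprS dvdz_mulr.
Qed.

Lemma coprimez_pXB1 d : (0 < d)%N -> coprimez P (P ^+ d - 1).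
Proof. by move=> d0; rewrite -coprimezN opprB coprimez_1BpX. Qed.

Lemma coprimez_pexp_decomp z : z != 0 ->
  exists (v : nat) (a : int), z = P ^+ v * a /\ coprimez P a.
Proof.
move=> z0; have z_gt0 : (0 < `|z|)%N by rewrite absz_gt0.
have [m cm] := pfactor_coprime p_pr z_gt0; set v := logn p `|z| => em.
exists v, ((-1) ^+ (z < 0)%R * m%:Z); split.
  by rewrite {1}[z]intEsign em PoszM PoszX; set s := (-1) ^+ _; ring.
by rewrite coprimezMr coprimezXr ?coprimezN ?coprimez1 // coprimezE !absz_nat.
Qed.

Lemma expz_totient_mod K z : (0 < K)%N -> coprimez P z ->
  (P ^+ K %| z ^+ totient (p ^ K) - 1)%Z.
Proof.
move=> K0 cz; rewrite -PoszX -eqz_mod_dvd.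
have pK0 : (p ^ K)%N%:Z != 0 by rewrite eqz_nat expn_eq0 negb_and -lt0n prime_gt0.
set zn := `|(z %% (p ^ K)%N%:Z)%Z|%N.
have ezn : (z %% (p ^ K)%N%:Z)%Z = zn%:Z by rewrite /zn gez0_abs ?modz_ge0.
have czn : coprime zn (p ^ K).
  rewrite coprime_pexpr // coprime_sym -[p]/(`|P|%N) -[zn]/(`|zn%:Z|%N) -coprimezE -ezn.
  by rewrite (coprimez_congr (b := z) K0) // -PoszX -eqz_mod_dvd modz_mod.
by rewrite -modzXm ezn -PoszX modz_nat Euler_exp_totient // -modz_nat.
Qed.

End PadicUnits.

(* T := d c^(phi - 1) satisfies T c = d c^phi ≡ d, and w := T^u with u e = 1 + s phi. *)
Lemma pexp_mod_root p K e (c d : int) : prime p -> (0 < K)%N -> (0 < e)%N ->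
  coprime e (p * (p - 1)) -> coprimez p%:Z c -> coprimez p%:Z d ->
  exists w : int, (p%:Z ^+ K %| w ^+ e * c - d)%Z.
Proof.
move=> p_pr K0 e0 ep cc cd; set phi := totient (p ^ K).
have phi0 : (0 < phi)%N by rewrite totient_gt0 expn_gt0 prime_gt0.
have e_phi : coprime e phi.
  move: ep; rewrite coprimeMr /phi totient_pfactor // coprimeMr -subn1 => /andP[ep ep1].
  by rewrite ep1 coprimeXr.
case: (egcdnP phi e0) => u s; rewrite (eqP e_phi) => ue _.
set T := d * c ^+ phi.-1; exists (T ^+ u).
have cT : coprimez p%:Z T by rewrite coprimezMr cd coprimezXr.
have -> : T ^+ u ^+ e * c - d = (T ^+ phi) ^+ s * (d * c ^+ phi) - 1 ^+ s * (d * 1).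
  have Tc : T * c = d * c ^+ phi by rewrite /T -mulrA -exprSr prednK.
  by rewrite -exprM ue exprD expr1 mulnC exprM -mulrA Tc expr1n mul1r mulr1.
by rewrite dvdz_subM ?dvdz_subX ?expz_totient_mod // dvdz_subM ?subrr ?dvdz0 ?expz_totient_mod.
Qed.

Lemma coprime_mod_multiple (a b : nat) (z : int) : coprime a b -> (0 < b)%N ->
  exists2 u : nat, (u < b)%N & (b%:Z %| z - u%:Z * a%:Z)%Z.
Proof.
move=> ab b0; have /coprimezP[[u v] /= uv] : coprimez a b by rewrite coprimezE.
have b0' : b%:Z != 0 by rewrite eqz_nat -lt0n.
set w := ((z * u) %% b)%Z; have w0 : 0 <= w by apply: modz_ge0.
exists `|w|%N; first by rewrite -ltz_nat gez0_abs ?ltz_pmod.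
set q := ((z * u) %/ b)%Z; have ezu : z * u = q * b%:Z + w := divz_eq (z * u) b.
have -> : z - `|w|%:Z * a%:Z = (q * a%:Z + z * v) * b%:Z.
  apply/eqP; rewrite -subr_eq0 gez0_abs //; apply/eqP.
  transitivity (z * (1 - (u * a%:Z + v * b%:Z)) - a%:Z * (q * b%:Z + w - z * u)); first ring.
  by rewrite uv -ezu !subrr !mulr0 subrr.
exact: dvdz_mull.
Qed.

Lemma large_lincomb (a b : nat) (t : int) K : coprime a b -> (0 < a)%N -> (0 < b)%N ->
  exists n m : nat, [/\ (K <= n)%N, (K <= m)%N & n%:Z * a%:Z - m%:Z * b%:Z = t].
Proof.
move=> ab a0 b0; have [u _ /dvdzP[s ts]] := coprime_mod_multiple t ab b0.
set L := (K + `|s|)%N.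
have m_ge : K%:Z <= L%:Z * a%:Z - s.
  have La : L%:Z <= L%:Z * a%:Z by rewrite -PoszM lez_nat leq_pmulr.
  have s_le : s <= `|s|%N%:Z by rewrite abszE ler_norm.
  by move: La; rewrite /L PoszD; lia.
exists (u + L * b)%N, `|(L%:Z * a%:Z - s)%R|%N; rewrite gez0_abs; last by lia.
split; first by rewrite (leq_trans _ (leq_addl u _)) // (leq_trans (leq_addr `|s| K)) // leq_pmulr.
  by rewrite -lez_nat gez0_abs //; lia.
by rewrite PoszD PoszM; move/eqP: ts; rewrite subr_eq => /eqP ->; ring.
Qed.

Definition pdecomp (p K : nat) (z : int) (c : nat) (u : int) : Prop :=
  exists z', z = p%:Z ^+ c * z' /\ (p%:Z ^+ K %| z' - u)%Z.

Section PadicDecomposition.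
Variables p K : nat.
Local Notation P := p%:Z.
Local Notation D := (pdecomp p K).

Lemma pdecompM z1 c1 u1 z2 c2 u2 :
  D z1 c1 u1 -> D z2 c2 u2 -> D (z1 * z2) (c1 + c2) (u1 * u2).
Proof.
move=> [a [-> ha]] [b [-> hb]]; exists (a * b); split; last exact: dvdz_subM.
by rewrite exprD; ring.
Qed.

Lemma pdecompX z c u k : D z c u -> D (z ^+ k) (c * k) (u ^+ k).
Proof.
move=> [a [-> ha]]; exists (a ^+ k); split; last exact: dvdz_subX.
by rewrite exprMn exprM.
Qed.

Lemma pdecomp_prod (I : eqType) (r : seq I) (Q : pred I) F c u :
  (forall i, i \in r -> Q i -> D (F i) (c i) (u i)) ->
  D (\prod_(i <- r | Q i) F i) (\sum_(i <- r | Q i) c i) (\prod_(i <- r | Q i) u i).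
Proof.
move=> Fcu; rewrite !(big_seq_cond Q).
apply: (big_ind3 (fun z c u => D z c u)) => [|z1 c1 u1 z2 c2 u2|i /andP[]].
- by exists 1; rewrite mul1r subrr dvdz0.
- exact: pdecompM.
- exact: Fcu.
Qed.

Lemma pdecomp_congr z c u c' u' :
  D z c u -> c = c' -> (P ^+ K %| u - u')%Z -> D z c' u'.
Proof.
move=> [a [-> ha]] <- uu; exists a; split=> //.
by rewrite -(subrK u a) -addrA rpredD.
Qed.

Lemma pdecomp_pexpD c d y u : (K <= d)%N -> D (P ^+ c * (P ^+ d * y + u)) c u.
Proof.
move=> Kd; exists (P ^+ d * y + u); split=> //.
by rewrite addrK -(subnKC Kd) exprD -mulrA dvdz_mulr.
Qed.

Lemma pdecomp_pexp c : D (P ^+ c) c 1.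
Proof. by exists 1; rewrite mulr1 subrr dvdz0. Qed.

Lemma pdecomp_unit z u : (P ^+ K %| z - u)%Z -> D z 0 u.
Proof. by exists z; rewrite mul1r. Qed.

End PadicDecomposition.

Definition shift_unit (p i j : nat) : int :=
  if (j < i)%N then 1 - p%:Z ^+ (i - j) else p%:Z ^+ (j - i) - 1.

Lemma coprimez_shift_unit p i j : prime p -> j != i -> coprimez p%:Z (shift_unit p i j).
Proof.
move=> p_pr ji; rewrite /shift_unit; case: ltnP => [lt_ji|le_ij].
  by apply: coprimez_1BpX; rewrite subn_gt0.
by apply: coprimez_pXB1; rewrite subn_gt0 ltn_neqAle eq_sym ji.
Qed.

Section ShiftedPoint.
Variables (p K i n : nat) (w : int).
Hypothesis K_le_n : (K <= n)%N.
Local Notation P := p%:Z.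
Local Notation x := (P ^+ i * (P ^+ n * w - 1)).

Lemma pdecomp_shifted : pdecomp p K x i (-1).
Proof. exact: pdecomp_pexpD. Qed.

Lemma pdecomp_shiftedD_self : pdecomp p K (x + P ^+ i) (i + n) w.
Proof. by exists w; rewrite subrr dvdz0 exprD; split=> //; ring. Qed.

Lemma pdecomp_shiftedD j : j != i -> pdecomp p K (x + P ^+ j) (minn i j) (shift_unit p i j).
Proof.
rewrite /shift_unit /minn; case: ltnP => [lt_ij _|le_ji ji].
  rewrite ltnNge ltnW //=.
  have -> : x + P ^+ j = P ^+ i * (P ^+ n * w + (P ^+ (j - i) - 1)).
    by rewrite -[in LHS](subnKC (ltnW lt_ij)) exprD; ring.
  exact: pdecomp_pexpD.
have lt_ji : (j < i)%N by rewrite ltn_neqAle ji.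
rewrite lt_ji.
have -> : x + P ^+ j = P ^+ j * (P ^+ (i - j + n) * w + (1 - P ^+ (i - j))).
  by rewrite -[in LHS](subnKC le_ji) !exprD; ring.
by apply: pdecomp_pexpD; rewrite (leq_trans K_le_n) ?leq_addl.
Qed.

End ShiftedPoint.

Definition modz_compatible (G : int -> int) : Prop :=
  forall M x y : int, (M %| x - y)%Z -> (M %| G x - G y)%Z.

Section SpecialPoints.
Variables (p q1 q2 q3 K : nat) (G : int -> int).
Hypotheses (p_pr : prime p) (G_compat : modz_compatible G) (G0 : G 0 = 1).
Local Notation P := p%:Z.
Local Notation fG x := (f_poly p q1 q2 q3 x * G x).

Lemma fG_pdecomp_pexp : exists s : nat, forall m, (K + q1 < m)%N ->
  pdecomp p K (fG (P ^+ m)) (q1 * s + q2 * q3 + m * (q1 * q2)) 1.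
Proof.
exists ((\sum_(1 <= j < q1.+1) j) * q3 + q2 * q3)%N => m Km.
have factor j : (j <= q1.+1)%N -> pdecomp p K (P ^+ m + P ^+ j) j 1.
  move=> jq1; have -> : P ^+ m + P ^+ j = P ^+ j * (P ^+ (m - j) * 1 + 1).
    by rewrite -[in LHS](@subnKC j m) ?exprD; [ring | lia].
  by apply: pdecomp_pexpD; lia.
have Gm : pdecomp p K (G (P ^+ m)) 0 1.
  apply/pdecomp_unit; rewrite -G0; apply: G_compat.
  by rewrite subr0 -(@subnKC K m) ?exprD ?dvdz_mulr //; lia.
apply: pdecomp_congr (pdecompM _ Gm) _ _; first apply: pdecompM; first apply: pdecompM.
- exact/pdecompX/pdecomp_pexp.
- apply: pdecomp_prod => j; rewrite mem_index_iota => /andP[_ jq1] _.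
  by apply/pdecompX/factor; lia.
- exact/pdecompX/factor.
- by rewrite -big_distrl /=; ring.
- by rewrite big1 ?expr1n ?mulr1 ?subrr.
Qed.

Lemma fG_pdecomp_shifted i : (0 < i)%N -> (i <= q1)%N -> exists s V,
  coprimez P V /\ forall n w, (K <= n)%N ->
  pdecomp p K (fG (P ^+ i * (P ^+ n * w - 1)))
    (q1 * s + i * (q2 * q3) + n * (q1 * q3)) (w ^+ (q1 * q3) * V).
Proof.
move=> i0 iq1; set r := index_iota 1 q1.+1.
have q1i : q1.+1 != i by rewrite gtn_eqF.
exists (i * q2 + i * q3 + (\sum_(j <- r | j != i) minn i j) * q3)%N.
exists ((-1) ^+ (q1 * q2) * \prod_(j <- r | j != i) shift_unit p i j ^+ (q1 * q3)
  * shift_unit p i q1.+1 ^+ (q2 * q3) * G (- P ^+ i)); split.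
  have cG : coprimez P (G (- P ^+ i)).
    have : (P ^+ 1 %| G (- P ^+ i) - G 0)%Z.
      by apply: G_compat; rewrite subr0 rpredN expr1 -(prednK i0) exprS dvdz_mulr.
    by move/(coprimez_congr (ltn0Sn 0)) => ->; rewrite G0 coprimez1.
  rewrite !coprimezMr cG !coprimezXr ?coprimezN ?coprimez1 ?coprimez_shift_unit //= !andbT.
  apply: (big_ind (coprimez P)) => [|a b|j ji].
  - exact: coprimez1.
  - by rewrite coprimezMr => -> ->.
  - by rewrite coprimezXr ?coprimez_shift_unit.
move=> n w Kn.
have Gx : pdecomp p K (G (P ^+ i * (P ^+ n * w - 1))) 0 (G (- P ^+ i)).
  apply/pdecomp_unit/G_compat; rewrite opprK.
  have -> : P ^+ i * (P ^+ n * w - 1) + P ^+ i = P ^+ (i + n) * w by rewrite exprD; ring.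
  by apply/dvdz_mulr/dvdz_exp2l; lia.
rewrite /f_poly (bigD1_seq i) ?mem_index_iota ?iota_uniq //=; last lia.
apply: pdecomp_congr (pdecompM _ Gx) _ _.
- apply: pdecompM; last exact/pdecompX/pdecomp_shiftedD.
  apply: pdecompM; first exact/pdecompX/pdecomp_shifted.
  apply: pdecompM; first exact/pdecompX/pdecomp_shiftedD_self.
  by apply: pdecomp_prod => j _ ji; apply/pdecompX/pdecomp_shiftedD.
- by rewrite -big_distrl /= (minn_idPl (ltnW _)) //; ring.
- by rewrite (_ : _ - _ = 0) ?dvdz0 //; ring.
Qed.

End SpecialPoints.

Lemma distinct_primes_coprime a b : prime a -> prime b -> a != b -> coprime a b.
Proof. by move=> a_pr b_pr ab; rewrite prime_coprime // dvdn_prime2. Qed.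

Lemma valuation_gap_exponents q1 q2 q3 (v : int) K :
  prime q1 -> prime q2 -> prime q3 -> (q1 < q2)%N -> (q2 < q3)%N ->
  exists2 i, (0 < i <= q1)%N & forall s s0 : nat, exists n m : nat,
    [/\ (K <= n)%N, (K <= m)%N &
        (q1 * s + i * (q2 * q3) + n * (q1 * q3))%N%:Z
        - (q1 * s0 + q2 * q3 + m * (q1 * q2))%N%:Z = v].
Proof.
move=> q1_pr q2_pr q3_pr q12 q23.
have q1_23 : coprime (q2 * q3) q1.
  by rewrite coprimeMl !distinct_primes_coprime // gtn_eqF // (ltn_trans q12).
have [u u_lt /dvdzP[t vt]] := coprime_mod_multiple v q1_23 (prime_gt0 q1_pr).
exists u.+1 => // s s0.
have q32 : coprime q3 q2 by rewrite distinct_primes_coprime // gtn_eqF.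
have [n [m [Kn Km nm]]] :=
  large_lincomb (t - s%:Z + s0%:Z) K q32 (prime_gt0 q3_pr) (prime_gt0 q2_pr).
exists n, m; split=> //; move/eqP: vt; rewrite subr_eq => /eqP ->.
have -> : t = n%:Z * q3%:Z - m%:Z * q2%:Z + s%:Z - s0%:Z by rewrite nm; ring.
by rewrite !PoszD !PoszM; ring.
Qed.

Definition pratio_approx (p : nat) (h : int -> int) : Prop :=
  forall (v a b : int) (K : nat), coprimez p%:Z a -> coprimez p%:Z b ->
  exists x y (al be : nat) (X Y : int),
  [/\ h x = p%:Z ^+ al * X, h y = p%:Z ^+ be * Y, coprimez p%:Z Y,
      al%:Z - be%:Z = v & (p%:Z ^+ K %| X * b - Y * a)%Z].

Lemma fG_pratio_approx p q1 q2 q3 (G : int -> int) :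
  prime p -> prime q1 -> prime q2 -> prime q3 -> (q1 < q2)%N -> (q2 < q3)%N ->
  coprime (q1 * q2 * q3) (p * (p - 1)) -> modz_compatible G -> G 0 = 1 ->
  pratio_approx p (fun x => f_poly p q1 q2 q3 x * G x).
Proof.
move=> p_pr q1_pr q2_pr q3_pr q12 q23 cop G_compat G0 v a b K ca cb.
have [s0 H0] := fG_pdecomp_pexp q1 q2 q3 K.+1 p_pr G_compat G0.
have [i /andP[i0 iq1] exps] := valuation_gap_exponents v (K.+1 + q1).+1 q1_pr q2_pr q3_pr q12 q23.
have [s [V [cV Hi]]] := fG_pdecomp_shifted q2 q3 K.+1 p_pr G_compat G0 i0 iq1.
have [n [m [Kn Km nm]]] := exps s s0.
have e13 : coprime (q1 * q3) (p * (p - 1)) by apply: coprime_dvdl cop; rewrite mulnAC dvdn_mulr.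
have e13_gt0 : (0 < q1 * q3)%N by rewrite muln_gt0 !prime_gt0.
have cVb : coprimez p%:Z (V * b) by rewrite coprimezMr cV cb.
have [w hw] := pexp_mod_root p_pr (ltn0Sn K) e13_gt0 e13 cVb ca.
have [X [hx hX]] := Hi n w (leq_trans (leq_addr _ _) (ltnW Kn)).
have [Y [hy hY]] := H0 m Km.
exists (p%:Z ^+ i * (p%:Z ^+ n * w - 1)), (p%:Z ^+ m).
exists (q1 * s + i * (q2 * q3) + n * (q1 * q3))%N, (q1 * s0 + q2 * q3 + m * (q1 * q2))%N.
exists X, Y; split=> //.
  by rewrite (coprimez_congr (ltn0Sn K) hY) coprimez1.
have -> : X * b - Y * a = (X - w ^+ (q1 * q3) * V) * b - (Y - 1) * a
                          + (w ^+ (q1 * q3) * (V * b) - a) by ring.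
apply: dvdz_trans (dvdz_exp2l _ (leqnSn K)) _.
by apply: rpredD hw; apply: rpredB; apply: dvdz_mulr.
Qed.

Lemma dense_Qp_of_pratio_approx p (h : int -> int) : prime p -> h 0 = 0 ->
  pratio_approx p h -> dense_Qp p (Rset h).
Proof.
move=> p_pr h0 approx r k.
have p0 : p%:Z != 0 by rewrite eqz_nat -lt0n prime_gt0.
have pX_unit_neq0 c Y : coprimez p%:Z Y -> p%:Z ^+ c * Y != 0.
  by move=> cY; rewrite mulf_neq0 ?expf_neq0 // (coprimez_neq0 p_pr cY).
have [->|r0] := eqVneq r 0.
  have [_ [y [_ [be [_ [Y [_ hy cY _ _]]]]]]] := approx 0 1 1 0%N (coprimez1 _) (coprimez1 _).
  exists 0; split; last by left.
  by exists 0, y; rewrite hy pX_unit_neq0 // h0 mul0r.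
have n0 : numq r != 0 by rewrite numq_eq0.
have [v1 [a [ra ca]]] := coprimez_pexp_decomp p_pr n0.
have [v2 [b [rb cb]]] := coprimez_pexp_decomp p_pr (denq_neq0 r).
have [x [y [al [be [X [Y [hx hy cY v_eq dvd_c]]]]]]] :=
  approx (v1%:Z - v2%:Z) a b (k + v2)%N ca cb.
have hy0 : h y != 0 by rewrite hy pX_unit_neq0.
exists ((h x)%:~R / (h y)%:~R); split; first by exists x, y.
set c := X * b - Y * a.
have cross : h x * denq r - numq r * h y = p%:Z ^+ (al + v2) * c.
  transitivity (p%:Z ^+ (al + v2) * X * b - p%:Z ^+ (v1 + be) * Y * a).
    by rewrite hx hy ra rb !exprD; ring.
  by rewrite (_ : (v1 + be = al + v2)%N) /c; [ring | lia].
have ratio_sub : (h x)%:~R / (h y)%:~R - r =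
    (h x * denq r - numq r * h y)%:~R / (h y * denq r)%:~R.
  rewrite -[r in LHS]divq_num_den rmorphB !rmorphM /=; field.
  by rewrite !intr_eq0 hy0 denq_neq0.
have [c0|c0] := eqVneq c 0.
  by left; apply/eqP; rewrite -subr_eq0 ratio_sub cross c0 mulr0 mul0r.
right; rewrite ratio_sub padic_val_frac ?mulf_neq0 ?denq_neq0 // ?cross ?mulf_neq0 ?expf_neq0 //.
rewrite logzM ?expf_neq0 // (logz_pexp p_pr).
rewrite hy rb mulrACA -exprD (logz_pexpM_coprime p_pr) ?coprimezMr ?cY ?cb //.
have : (k + v2 <= logz p c)%N by rewrite -pexp_dvdzE.
lia.
Qed.

Definition g2_cofactor (p q1 q2 q3 : nat) (x : int) : int :=
  (\prod_(1 <= i < q3) (p%:Z ^+ i * x + 1) ^+ (q1 * q2))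
  * (\prod_(q3 <= i < q3 + q2 - q1) (p%:Z ^+ i * x + 1) ^+ (q1 * q3))
  * (\prod_(q3 + q2 - q1 <= i < q3 + q2 - 1) (p%:Z ^+ i * x + 1) ^+ (q2 * q3)).

Lemma g2_poly_cofactor p q1 q2 q3 x :
  g2_poly p q1 q2 q3 x 1 = f_poly p q1 q2 q3 x * g2_cofactor p q1 q2 q3 x.
Proof.
rewrite /g2_poly /f_poly /g2_cofactor mulr1 !mulrA; congr (_ * _ * _ * _ * _ * _).
by apply: eq_bigr => i _; rewrite mulr1.
Qed.

Lemma g2_cofactor_compatible p q1 q2 q3 : modz_compatible (g2_cofactor p q1 q2 q3).
Proof.
move=> M x y xy.
have factor i : (M %| (p%:Z ^+ i * x + 1) - (p%:Z ^+ i * y + 1))%Z.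
  by rewrite (_ : _ - _ = p%:Z ^+ i * (x - y)) ?dvdz_mull //; ring.
have prod a b e : (M %| \prod_(a <= i < b) (p%:Z ^+ i * x + 1) ^+ e
                      - \prod_(a <= i < b) (p%:Z ^+ i * y + 1) ^+ e)%Z.
  apply: (big_ind2 (fun u v => M %| u - v)%Z) => [|u1 v1 u2 v2|i _].
  - by rewrite subrr dvdz0.
  - exact: dvdz_subM.
  - exact/dvdz_subX/factor.
by rewrite /g2_cofactor !dvdz_subM.
Qed.

Lemma g2_cofactor0 p q1 q2 q3 : g2_cofactor p q1 q2 q3 0 = 1.
Proof. by rewrite /g2_cofactor !big1 ?mulr1 // => i _; rewrite mulr0 add0r expr1n. Qed.

Lemma f_poly0 p q1 q2 q3 : (0 < q1)%N -> (0 < q2)%N -> f_poly p q1 q2 q3 0 = 0.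
Proof. by move=> q1_gt0 q2_gt0; rewrite /f_poly expr0n muln_eq0 !gtn_eqF // !mul0r. Qed.

Lemma dense_Qp_Rset_image p (X Y : Type) (h : X -> int) (h' : Y -> int) :
  (forall x, exists y, h' y = h x) -> dense_Qp p (Rset h) -> dense_Qp p (Rset h').
Proof.
move=> im dense r k; have [s [[x [y [hy0 es]]] close]] := dense r k.
have [x' ex] := im x; have [y' ey] := im y.
by exists s; split=> //; exists x', y'; rewrite ex ey.
Qed.

(* Defs.coord, since vector.v also exports a [coord]. *)
Lemma coordE n (x : 'I_n -> int) j (lt_jn : (j < n)%N) : Defs.coord x j = x (Ordinal lt_jn).
Proof. by rewrite /Defs.coord insubT. Qed.

Lemma gn_fun_g2_poly p q1 q2 q3 n x : (2 < n)%N ->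
  exists y, gn_fun p q1 q2 q3 n y = g2_poly p q1 q2 q3 x 1.
Proof.
move=> n_gt2; exists (fun i : 'I_n => if val i == 0%N then x else 1).
have n_gt0 : (0 < n)%N by lia.
have n_gt1 : (1 < n)%N by lia.
rewrite /gn_fun (coordE _ n_gt0) (coordE _ n_gt1) /=.
rewrite big1_seq ?expr1n ?mulr1 // => i /andP[_].
by rewrite mem_index_iota => /andP[i2 lt_in]; rewrite (coordE _ lt_in) /= gtn_eqF // ltnW.
Qed.

Theorem theorem4p8 (p q1 q2 q3 : nat) :
  prime p -> prime q1 -> prime q2 -> prime q3 ->
  (q1 < q2)%N -> (q2 < q3)%N ->
  coprime (q1 * q2 * q3) (p * (p - 1)) ->
  (* (a) *)
  (dense_Qp p (Rset (f_poly p q1 q2 q3)) /\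
   forall q : nat, prime q -> (p ^ q1.+1 < q)%N ->
     ~ dense_Qp q (Rset (f_poly p q1 q2 q3)))
  /\
  (* (b) *)
  (dense_Qp p (Rset (g2_fun p q1 q2 q3)) /\
   forall q : nat, prime q -> (p ^ (q3 + q2 + q1 - 1) < q)%N ->
     ~ dense_Qp q (Rset (g2_fun p q1 q2 q3)))
  /\
  (* (c) *)
  (forall n : nat, (2 < n)%N ->
     dense_Qp p (Rset (gn_fun p q1 q2 q3 n)) /\
     forall q : nat, prime q -> (p ^ (q3 + q2 + q1 - 1) < q)%N ->
       ~ dense_Qp q (Rset (gn_fun p q1 q2 q3 n))).
Proof.
move=> p_pr q1_pr q2_pr q3_pr q12 q23 cop.
have p_gt1 := prime_gt1 p_pr; have q1_gt0 := prime_gt0 q1_pr; have q2_gt0 := prime_gt0 q2_pr.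
have dense_fG G : modz_compatible G -> G 0 = 1 ->
    dense_Qp p (Rset (fun x => f_poly p q1 q2 q3 x * G x)).
  move=> G_compat G0; apply: dense_Qp_of_pratio_approx => //; first by rewrite f_poly0 ?mul0r.
  exact: fG_pratio_approx.
have dense_g2 := dense_fG _ (@g2_cofactor_compatible p q1 q2 q3) (g2_cofactor0 _ _ _ _).
split; [split | split; [split | move=> n n_gt2; split]].
- apply: dense_Qp_Rset_image (dense_fG (fun=> 1) _ erefl) => [x|M x y _].
    by exists x; rewrite mulr1.
  by rewrite subrr dvdz0.
- move=> q q_pr q_big; apply: (not_dense_Qp_pair_multiple q1_pr q2_pr q3_pr q_pr) => x.
  exact: f_poly_pair_multiple.
- by apply: dense_Qp_Rset_image dense_g2 => x; exists (x, 1); rewrite /g2_fun g2_poly_cofactor.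
- move=> q q_pr q_big; apply: (not_dense_Qp_pair_multiple q1_pr q2_pr q3_pr q_pr) => -[x1 x2].
  exact: g2_poly_pair_multiple.
- apply: dense_Qp_Rset_image dense_g2 => x.
  by rewrite -g2_poly_cofactor; apply: gn_fun_g2_poly.
- move=> q q_pr q_big; apply: (not_dense_Qp_pair_multiple q1_pr q2_pr q3_pr q_pr) => x.
  exact: gn_fun_pair_multiple.
Qed.
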